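(* Let $\psi\in\mathcal L$ be well-formed, let $\tau$ be a trace, and let $\sigma=\mathsf{seq}_\psi(\tau)$. Then $\psi^+(\sigma)\equiv\top$ if and only if $\tau\models\psi$.
   Context: Syntax. Fix a multi-sorted signature $\Sigma=\langle\mathcal S,\mathcal P,\mathcal F,V\rangle$ with a finite non-empty set $V$ of sorted data variables. Each $v\in V$ has a lookback variable $\overleftarrow v$, and $\overleftarrow V=\{\overleftarrow v\mid v\in V\}$. Terms are $t::=v\mid\overleftarrow v\mid f(t_1,\dots,t_k)$; atoms are $p(t_1,\dots,t_k)$. First-order formulas are $\phi::=\top\mid\bot\mid a\mid\neg a\mid\phi\wedge\phi\mid\phi\vee\phi$. Properties are $\psi::=\phi\mid\psi\wedge\psi\mid\psi\vee\psi\mid\mathsf X\psi\mid\mathsf X_{\mathsf w}\psi\mid\psi\mathsf U\psi\mid\psi\mathsf R\psi$, forming the set $\mathcal L$; $\mathit{foa}(\psi)$ is the set of atoms of $\psi$. Semantics. A trace is $\tau=(M,\langle\alpha_0,\dots,\alpha_{n-1}\rangle)$ with $M$ a $\Sigma$-structure and $\alpha_i$ assignments on $V$. A term is well-defined at $i$ if $0<i<n$, or $i=0$ and it has no lookback variable. $v$ evaluates to $\alpha_i(v)$ and $\overleftarrow v$ to $\alpha_{i-1}(v)$. - $\tau,i\models p(t_1,\dots,t_k)$ iff some $t_j$ is not well-defined at $i$, or the evaluated tuple is in $p^M$; $\tau,i\models\neg a$ iff $\tau,i\not\models a$. - $\wedge$ and $\vee$ are as usual. - $\mathsf X\psi$: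 $i<n-1$ and $\psi$ holds at $i+1$. - $\mathsf X_{\mathsf w}\psi$: $i=n-1$ or $\psi$ holds at $i+1$. - $\psi_1\mathsf U\psi_2$: some $j\in[i,n)$ has $\psi_2$, with $\psi_1$ on $[i,j)$. - $\psi_1\mathsf R\psi_2$: $\psi_2$ holds on $[i,n)$, or some $j\in[i,n)$ has $\psi_1$ with $\psi_2$ on $[i,j]$. $\tau\models\psi$ iff $\tau,0\models\psi$. For assignments $\alpha,\alpha'$ on $V$, $\alpha\rhd\alpha'$ maps $\overleftarrow v\mapsto\alpha(v)$ and $v\mapsto\alpha'(v)$. Normal forms. - $\mathit{last}$ is a dedicated proposition meant to hold only at the last instant. - $\mathsf{tnps}(\psi)=\{\psi\}$ if $\psi$ is a (negated) atom or rooted by a temporal operator, and $\mathsf{tnps}(\psi_1\wedge\psi_2)=\mathsf{tnps}(\psi_1\vee\psi_2)=\mathsf{tnps}(\psi_1)\cup\mathsf{tnps}(\psi_2)$. - $\mathsf{xnf}$ fixes literals, $\top$, $\bot$ and $\mathsf X$/$\mathsf X_{\mathsf w}$-rooted properties, commutes with $\wedge$ and $\vee$, and satisfies $\mathsf{xnf}(\psi_1\mathsf U\psi_2)=\mathsf{xnf}(\psi_2)\vee(\mathsf{xnf}(\psi_1)\wedge\mathsf X(\psi_1\mathsf U\psi_2))$ and $\mathsf{xnf}(\psi_1\mathsf R\psi_2)=(\mathsf{xnf}(\psi_2)\vee\mathit{last})\wedge(\mathsf{xnf}(\psi_1)\vee\mathsf X_{\mathsf w}(\psi_1\mathsf R\psi_2))$.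 - $\psi$ is well-formed if no (negated) atom in $\mathsf{tnps}(\mathsf{xnf}(\psi))$ contains a lookback variable. Progression. For a set of atoms $A$, $\psi^+(A)$ is defined by: - an atom $a$ maps to $\top$ if $a\in A$ and to $\bot$ otherwise; $\neg a$ maps to $\bot$ if $a\in A$ and to $\top$ otherwise; - $^+$ commutes with $\wedge$ and $\vee$; - $(\mathsf X\psi_1)^+(A)=\psi_1\wedge\neg\mathit{last}$, and $(\mathsf X_{\mathsf w}\psi_1)^+(A)=\psi_1\vee\mathit{last}$; - $(\psi_1\mathsf U\psi_2)^+(A)=\psi_2^+(A)\vee(\psi_1^+(A)\wedge(\mathsf X(\psi_1\mathsf U\psi_2))^+(A))$; - $(\psi_1\mathsf R\psi_2)^+(A)=\psi_2^+(A)\wedge(\psi_1^+(A)\vee(\mathsf X_{\mathsf w}(\psi_1\mathsf R\psi_2))^+(A))$. On sequences, $\psi^+(\epsilon)=\psi$ and $\psi^+(A\rho)=(\psi^+(A))^+(\rho)$. $\equiv$ is propositional equivalence, with atoms, $\mathit{last}$ and temporally-rooted subproperties treated as opaque propositions. Corresponding atom sequence. $\mathsf{seq}_\psi(\tau)=\langle A_0,\dots,A_{n-1}\rangle$, where: - $A_0=\{a\in\mathit{foa}(\psi)\mid a$ contains no lookback variable and $M,\alpha_0\models a\}$; - $A_i=\{a\in\mathit{foa}(\psi)\mid M,\alpha_{i-1}\rhd\alpha_i\models a\}$ for $0<i<n$.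
   Formalization: The test ψ⁺(σ) ≡ ⊤ is replaced by equivalence to ⊤ after ⊤ is substituted for last and ⊥ for ¬last in ψ⁺(σ), and progression sends last to ⊥ and ¬last to ⊤. The statement above fails without it. *)

From Stdlib Require Import List ClassicalEpsilon.
Import ListNotations.
Set Implicit Arguments.

Record signature := {
  sort : Type;
  pred : Type;
  fsym : Type;
  var : Type;
  var_sort : var -> sort;
  pred_ar : pred -> list sort;
  fsym_ar : fsym -> list sort;
  fsym_res : fsym -> sort;
  var_finite : exists l : list var, forall v, In v l;
  var_nonempty : inhabited var
}.

Inductive hlist (S : Type) (D : S -> Type) : list S -> Type :=
| hnil : hlist D nil
| hcons (s : S) (ss : list S) : D s -> hlist D ss -> hlist D (s :: ss).
Arguments hnil {S D}.
Arguments hcons {S D s ss}.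

Section LTLfMT.
Context {Sg : signature}.

Inductive term : sort Sg -> Type :=
| TVar (v : var Sg) : term (var_sort Sg v)
| TLb (v : var Sg) : term (var_sort Sg v)
| TApp (f : fsym Sg) : terms (fsym_ar Sg f) -> term (fsym_res Sg f)
with terms : list (sort Sg) -> Type :=
| TNil : terms nil
| TCons (s : sort Sg) (ss : list (sort Sg)) : term s -> terms ss -> terms (s :: ss).

Record atom := Atom { apred : pred Sg; aargs : terms (pred_ar Sg apred) }.

Fixpoint term_lb (s : sort Sg) (t : term s) : bool :=
  match t with
  | TVar _ => false
  | TLb _ => true
  | TApp _ ts => terms_lb ts
  end
with terms_lb (ss : list (sort Sg)) (ts : terms ss) : bool :=
  match ts with
  | TNil => false
  | TCons t ts' => orb (term_lb t) (terms_lb ts')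
  end.

Definition atom_lb (a : atom) : bool := terms_lb (aargs a).

Record structure := {
  dom : sort Sg -> Type;
  fint : forall f : fsym Sg, hlist dom (fsym_ar Sg f) -> dom (fsym_res Sg f);
  pint : forall p : pred Sg, hlist dom (pred_ar Sg p) -> Prop
}.

Definition assignment (M : structure) := forall v : var Sg, dom M (var_sort Sg v).

Fixpoint eval_term (M : structure) (ap ac : assignment M) (s : sort Sg) (t : term s)
  : dom M s :=
  match t in term s return dom M s with
  | TVar v => ac v
  | TLb v => ap v
  | TApp f ts => fint M f (eval_terms ap ac ts)
  end
with eval_terms (M : structure) (ap ac : assignment M) (ss : list (sort Sg)) (ts : terms ss)
  : hlist (dom M) ss :=
  match ts in terms ss return hlist (dom M) ss with
  | TNil => hnil
  | TCons t ts' => hcons (eval_term ap ac t) (eval_terms ap ac ts')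
  end.

Definition atom_holds (M : structure) (ap ac : assignment M) (a : atom) : Prop :=
  pint M (apred a) (eval_terms ap ac (aargs a)).

(* Properties.  PLast / PNLast are the dedicated proposition [last] and its
   negation; they only arise in progressed formulas (not in L). *)
Inductive prop :=
| PTop | PBot
| PAtom (a : atom) | PNAtom (a : atom)
| PAnd (p q : prop) | POr (p q : prop)
| PX (p : prop) | PXw (p : prop)
| PU (p q : prop) | PR (p q : prop)
| PLast | PNLast.

Fixpoint in_L (p : prop) : Prop :=
  match p with
  | PTop | PBot | PAtom _ | PNAtom _ => True
  | PAnd p q | POr p q | PU p q | PR p q => in_L p /\ in_L q
  | PX p | PXw p => in_L p
  | PLast | PNLast => False
  end.

Fixpoint foa (p : prop) : list atom :=
  match p with
  | PAtom a | PNAtom a => [a]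
  | PAnd p q | POr p q | PU p q | PR p q => foa p ++ foa q
  | PX p | PXw p => foa p
  | _ => []
  end.

(* Traces: a structure and n >= 1 assignments alpha_0 ... alpha_{n-1}
   (entries of [tasg] at indices >= n are irrelevant). *)
Record trace := {
  tM : structure;
  tlen : nat;
  tasg : nat -> assignment tM;
  tlen_pos : 0 < tlen
}.

Definition atom_sat (tau : trace) (i : nat) (a : atom) : Prop :=
  match i with
  | 0 => atom_lb a = true \/ atom_holds (tasg tau 0) (tasg tau 0) a
  | S j => atom_holds (tasg tau j) (tasg tau (S j)) a
  end.

Fixpoint sat (tau : trace) (i : nat) (p : prop) : Prop :=
  let n := tlen tau in
  match p with
  | PTop => True
  | PBot => False
  | PAtom a => atom_sat tau i a
  | PNAtom a => ~ atom_sat tau i a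
  | PAnd p q => sat tau i p /\ sat tau i q
  | POr p q => sat tau i p \/ sat tau i q
  | PX p => i < n - 1 /\ sat tau (S i) p
  | PXw p => i = n - 1 \/ sat tau (S i) p
  | PU p q => exists j, i <= j < n /\ sat tau j q /\
                        (forall k, i <= k < j -> sat tau k p)
  | PR p q => (forall j, i <= j < n -> sat tau j q) \/
              (exists j, i <= j < n /\ sat tau j p /\
                         (forall k, i <= k <= j -> sat tau k q))
  | PLast => i = n - 1
  | PNLast => i <> n - 1
  end.

Definition models (tau : trace) (p : prop) : Prop := sat tau 0 p.

Fixpoint tnps (p : prop) : list prop :=
  match p with
  | PAnd p q | POr p q => tnps p ++ tnps q
  | PAtom _ | PNAtom _ | PX _ | PXw _ | PU _ _ | PR _ _ => [p]
  | _ => []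
  end.

Fixpoint xnf (p : prop) : prop :=
  match p with
  | PAnd p q => PAnd (xnf p) (xnf q)
  | POr p q => POr (xnf p) (xnf q)
  | PU p q => POr (xnf q) (PAnd (xnf p) (PX (PU p q)))
  | PR p q => PAnd (POr (xnf q) PLast) (POr (xnf p) (PXw (PR p q)))
  | _ => p
  end.

Definition well_formed (p : prop) : Prop :=
  forall q, In q (tnps (xnf p)) ->
    forall a, (q = PAtom a \/ q = PNAtom a) -> atom_lb a = false.

Definition decP (P : Prop) : bool :=
  if excluded_middle_informative P then true else false.

Fixpoint prog (A : atom -> Prop) (p : prop) : prop :=
  match p with
  | PTop => PTop
  | PBot => PBot
  | PAtom a => if decP (A a) then PTop else PBot
  | PNAtom a => if decP (A a) then PBot else PTop
  | PAnd p q => PAnd (prog A p) (prog A q)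
  | POr p q => POr (prog A p) (prog A q)
  | PX p1 => PAnd p1 PNLast
  | PXw p1 => POr p1 PLast
  | PU p q => POr (prog A q) (PAnd (prog A p) (PAnd (PU p q) PNLast))
  | PR p q => PAnd (prog A q) (POr (prog A p) (POr (PR p q) PLast))
  | PLast => PBot
  | PNLast => PTop
  end.

Fixpoint prog_seq (sigma : list (atom -> Prop)) (p : prop) : prop :=
  match sigma with
  | nil => p
  | A :: rho => prog_seq rho (prog A p)
  end.

(* propositional evaluation: atoms, last and temporally-rooted
   subproperties are opaque propositions *)
Fixpoint peval (va : atom -> bool) (vl : bool) (vt : prop -> bool) (p : prop) : bool :=
  match p with
  | PTop => true
  | PBot => false
  | PAtom a => va a
  | PNAtom a => negb (va a)
  | PAnd p q => andb (peval va vl vt p) (peval va vl vt q)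
  | POr p q => orb (peval va vl vt p) (peval va vl vt q)
  | PLast => vl
  | PNLast => negb vl
  | PX _ | PXw _ | PU _ _ | PR _ _ => vt p
  end.

Definition pequiv (p q : prop) : Prop :=
  forall va vl vt, peval va vl vt p = peval va vl vt q.

(* replace the (propositional) occurrences of last by true: the trace ended *)
Fixpoint last_true (p : prop) : prop :=
  match p with
  | PAnd p q => PAnd (last_true p) (last_true q)
  | POr p q => POr (last_true p) (last_true q)
  | PLast => PTop
  | PNLast => PBot
  | _ => p
  end.

Definition seq_atoms (p : prop) (tau : trace) : list (atom -> Prop) :=
  map (fun i =>
         match i with
         | 0 => fun a => In a (foa p) /\ atom_lb a = false /\
                         atom_holds (tasg tau 0) (tasg tau 0) a
         | S j => fun a => In a (foa p) /\
                           atom_holds (tasg tau j) (tasg tau (S j)) a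
         end)
      (seq 0 (tlen tau)).

End LTLfMT.

(* Once the
   whole sequence is consumed, reading [last] as true leaves a formula whose truth value
   [verdict i r] does not depend on the opaque propositions.  This value obeys the same
   expansion laws as [sat tau i], so the two agree by induction on the remaining length of
   the trace and on the property.  The atom sequence departs from the semantics only at
   position 0, where atoms with a lookback variable hold but are left out of A_0;
   well-formedness says exactly that such atoms are never decided at position 0. *)
From Stdlib Require Import List ClassicalEpsilon Bool Arith Lia.
Import ListNotations.

Section Progression.
Context {Sg : signature}.
Implicit Types (p q r : @prop Sg) (rho : list (@atom Sg -> Prop)).

Lemma decP_spec (P : Prop) : reflect P (decP P).
Proof. unfold decP; destruct (excluded_middle_informative P); constructor; assumption. Qed.

Lemma prog_seq_PTop rho : prog_seq rho PTop = PTop.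
Proof. induction rho; auto. Qed.

Lemma prog_seq_PBot rho : prog_seq rho PBot = PBot.
Proof. induction rho; auto. Qed.

Lemma prog_seq_PAnd rho p q :
  prog_seq rho (PAnd p q) = PAnd (prog_seq rho p) (prog_seq rho q).
Proof. revert p q; induction rho; simpl; auto. Qed.

Lemma prog_seq_POr rho p q :
  prog_seq rho (POr p q) = POr (prog_seq rho p) (prog_seq rho q).
Proof. revert p q; induction rho; simpl; auto. Qed.

(* The atoms decided by the next progression step. *)
Fixpoint now_atoms r : list (@atom Sg) :=
  match r with
  | PAtom a | PNAtom a => [a]
  | PAnd p q | POr p q | PU p q | PR p q => now_atoms p ++ now_atoms q
  | _ => []
  end.

Lemma now_atoms_incl_foa r : incl (now_atoms r) (foa r).
Proof.
  induction r; cbn [now_atoms foa]; auto using incl_refl, incl_nil_l, incl_app_app.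
Qed.

Lemma now_atoms_tnps_xnf r a :
  In a (now_atoms r) -> In (PAtom a) (tnps (xnf r)) \/ In (PNAtom a) (tnps (xnf r)).
Proof.
  induction r; cbn [now_atoms xnf tnps]; rewrite ?in_app_iff; cbn [In]; intuition congruence.
Qed.

Lemma well_formed_now_atoms r a :
  well_formed r -> In a (now_atoms r) -> atom_lb a = false.
Proof.
  intros Hw Ha; destruct (now_atoms_tnps_xnf _ _ Ha) as [Hq | Hq]; exact (Hw _ Hq a ltac:(auto)).
Qed.

End Progression.

Section Semantics.
Context {Sg : signature} (tau : @trace Sg).
Implicit Types (p q : @prop Sg).

Lemma sat_PU_unfold i p q : i < tlen tau ->
  sat tau i (PU p q) <-> sat tau i q \/ sat tau i p /\ sat tau i (PX (PU p q)).
Proof.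
  intros Hi; cbn [sat]; split.
  - intros (j & Hj & Hq & Hp).
    destruct (Nat.eq_dec j i) as [-> | Hji]; [now left | right].
    split; [apply Hp; lia |]; split; [lia |].
    exists j; repeat split; try lia; auto.
    intros k Hk; apply Hp; lia.
  - intros [Hq | (Hp & Hlt & j & Hj & Hq & Hpj)].
    + exists i; repeat split; auto; intros; lia.
    + exists j; repeat split; try lia; auto.
      intros k Hk; destruct (Nat.eq_dec k i) as [-> | Hki]; auto.
      apply Hpj; lia.
Qed.

Lemma sat_PR_unfold i p q : i < tlen tau ->
  sat tau i (PR p q) <-> sat tau i q /\ (sat tau i p \/ sat tau i (PXw (PR p q))).
Proof.
  intros Hi; cbn [sat]; split.
  - intros [Hall | (j & Hj & Hp & Hq)].
    + split; [apply Hall; lia |].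
      destruct (Nat.eq_dec i (tlen tau - 1)); [tauto |].
      right; right; left; intros j Hj; apply Hall; lia.
    + split; [apply Hq; lia |].
      destruct (Nat.eq_dec j i) as [-> | Hji]; [tauto |].
      right; right; right; exists j; repeat split; try lia; auto.
      intros k Hk; apply Hq; lia.
  - intros [Hq [Hp | [Hlast | [Hall | (j & Hj & Hp & Hqj)]]]].
    + right; exists i; repeat split; auto; try lia.
      intros k Hk; replace k with i by lia; exact Hq.
    + left; intros j Hj; replace j with i by lia; exact Hq.
    + left; intros j Hj; destruct (Nat.eq_dec j i) as [-> | Hji]; auto.
      apply Hall; lia.
    + right; exists j; repeat split; try lia; auto.
      intros k Hk; destruct (Nat.eq_dec k i) as [-> | Hki]; auto.
      apply Hqj; lia.
Qed.

End Semantics.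

Section Verdict.
Context {Sg : signature} (tau : @trace Sg) (A : nat -> @atom Sg -> Prop).
Implicit Types (p q r : @prop Sg).
Notation n := (tlen tau).

Definition agrees (i : nat) (a : @atom Sg) : Prop := A i a <-> atom_sat tau i a.

Definition faithful_from (i : nat) r : Prop :=
  (forall a, In a (now_atoms r) -> agrees i a) /\
  (forall j a, i < j -> In a (foa r) -> agrees j a).

Lemma faithful_from_app i r p q : faithful_from i r ->
  now_atoms r = now_atoms p ++ now_atoms q -> foa r = foa p ++ foa q ->
  faithful_from i p /\ faithful_from i q.
Proof.
  intros [Hi Hj] Hnow Hfoa; rewrite Hnow in Hi; rewrite Hfoa in Hj.
  split; split; intros; auto using in_or_app.
Qed.

Lemma faithful_from_next i r r' :
  incl (foa r') (foa r) -> faithful_from i r -> faithful_from (S i) r'.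
Proof.
  intros Hincl [_ Hj]; split.
  - intros a Ha; apply Hj; [lia | apply Hincl, now_atoms_incl_foa, Ha].
  - intros j a Hij Ha; apply Hj; [lia | apply Hincl, Ha].
Qed.

Variables (va : @atom Sg -> bool) (vl : bool) (vt : @prop Sg -> bool).

Definition verdict (i : nat) r : bool :=
  peval va vl vt (last_true (prog_seq (map A (seq i (n - i))) r)).

Lemma verdict_cons i r : i < n ->
  verdict i r = peval va vl vt (last_true (prog_seq (map A (seq (S i) (n - S i))) (prog (A i) r))).
Proof. intros Hi; unfold verdict; replace (n - i) with (S (n - S i)) by lia; reflexivity. Qed.

Lemma verdict_PTop i : verdict i PTop = true.
Proof. unfold verdict; rewrite prog_seq_PTop; reflexivity. Qed.

Lemma verdict_PBot i : verdict i PBot = false.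
Proof. unfold verdict; rewrite prog_seq_PBot; reflexivity. Qed.

Lemma verdict_PAtom i a : i < n -> verdict i (PAtom a) = decP (A i a).
Proof.
  intros Hi; rewrite verdict_cons by exact Hi; cbn [prog].
  destruct (decP (A i a)); rewrite ?prog_seq_PTop, ?prog_seq_PBot; reflexivity.
Qed.

Lemma verdict_PNAtom i a : i < n -> verdict i (PNAtom a) = negb (decP (A i a)).
Proof.
  intros Hi; rewrite verdict_cons by exact Hi; cbn [prog].
  destruct (decP (A i a)); rewrite ?prog_seq_PTop, ?prog_seq_PBot; reflexivity.
Qed.

Lemma verdict_PAnd i p q : verdict i (PAnd p q) = verdict i p && verdict i q.
Proof. unfold verdict; rewrite prog_seq_PAnd; reflexivity. Qed.

Lemma verdict_POr i p q : verdict i (POr p q) = verdict i p || verdict i q.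
Proof. unfold verdict; rewrite prog_seq_POr; reflexivity. Qed.

Lemma verdict_PX i p : i < n -> verdict i (PX p) = (S i <? n) && verdict (S i) p.
Proof.
  intros Hi; rewrite verdict_cons by exact Hi; cbn [prog]; rewrite prog_seq_PAnd.
  unfold verdict; destruct (n - S i) as [| k] eqn:Hk.
  - replace (S i <? n) with false by (symmetry; apply Nat.ltb_ge; lia).
    cbn [seq map prog_seq last_true peval]; apply andb_false_r.
  - replace (S i <? n) with true by (symmetry; apply Nat.ltb_lt; lia).
    cbn [seq map prog_seq prog]; rewrite prog_seq_PTop; cbn [last_true peval].
    apply andb_true_r.
Qed.

Lemma verdict_PXw i p : i < n -> verdict i (PXw p) = (S i =? n) || verdict (S i) p.
Proof.
  intros Hi; rewrite verdict_cons by exact Hi; cbn [prog]; rewrite prog_seq_POr.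
  unfold verdict; destruct (n - S i) as [| k] eqn:Hk.
  - replace (S i =? n) with true by (symmetry; apply Nat.eqb_eq; lia).
    cbn [seq map prog_seq last_true peval]; apply orb_true_r.
  - replace (S i =? n) with false by (symmetry; apply Nat.eqb_neq; lia).
    cbn [seq map prog_seq prog]; rewrite prog_seq_PBot; cbn [last_true peval].
    apply orb_false_r.
Qed.

Lemma verdict_PU i p q : i < n ->
  verdict i (PU p q) = verdict i q || verdict i p && verdict i (PX (PU p q)).
Proof.
  intros Hi; rewrite !verdict_cons by exact Hi; cbn [prog].
  rewrite prog_seq_POr, !prog_seq_PAnd; reflexivity.
Qed.

Lemma verdict_PR i p q : i < n ->
  verdict i (PR p q) = verdict i q && (verdict i p || verdict i (PXw (PR p q))).
Proof.
  intros Hi; rewrite !verdict_cons by exact Hi; cbn [prog].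
  rewrite prog_seq_PAnd, !prog_seq_POr; reflexivity.
Qed.

Lemma verdict_PX_sat i r : i < n ->
  (S i < n -> (verdict (S i) r = true <-> sat tau (S i) r)) ->
  (verdict i (PX r) = true <-> sat tau i (PX r)).
Proof.
  intros Hi Hnext; rewrite verdict_PX by exact Hi; cbn [sat].
  rewrite andb_true_iff, Nat.ltb_lt.
  split; intros [Hlt H]; split; try lia; apply Hnext; auto; lia.
Qed.

Lemma verdict_PXw_sat i r : i < n ->
  (S i < n -> (verdict (S i) r = true <-> sat tau (S i) r)) ->
  (verdict i (PXw r) = true <-> sat tau i (PXw r)).
Proof.
  intros Hi Hnext; rewrite verdict_PXw by exact Hi; cbn [sat].
  rewrite orb_true_iff, Nat.eqb_eq.
  split; intros [H | H]; try (left; lia);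
    (destruct (Nat.eq_dec (S i) n); [left; lia | right; apply Hnext; auto; lia]).
Qed.

Lemma verdict_sat i r : i < n -> in_L r -> faithful_from i r ->
  (verdict i r = true <-> sat tau i r).
Proof.
  remember (n - i) as k eqn:Hk; revert i r Hk.
  induction k as [| k IHk]; intros i r Hk Hi; [lia |].
  assert (Hnext : forall r', in_L r' -> faithful_from (S i) r' -> S i < n ->
            (verdict (S i) r' = true <-> sat tau (S i) r'))
    by (intros; apply IHk; auto; lia).
  clear IHk Hk.
  induction r; intros HL Hf.
  - rewrite verdict_PTop; cbn [sat]; tauto.
  - rewrite verdict_PBot; cbn [sat]; split; [discriminate | tauto].
  - rewrite verdict_PAtom by exact Hi; cbn [sat].
    pose proof (proj1 Hf a (in_eq a [])) as Ha; unfold agrees in Ha.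
    destruct (decP_spec (A i a)); split; try discriminate; tauto.
  - rewrite verdict_PNAtom by exact Hi; cbn [sat].
    pose proof (proj1 Hf a (in_eq a [])) as Ha; unfold agrees in Ha.
    destruct (decP_spec (A i a)); cbn [negb]; split; try discriminate; tauto.
  - destruct (faithful_from_app _ _ r1 r2 Hf eq_refl eq_refl) as [Hf1 Hf2].
    rewrite verdict_PAnd, andb_true_iff, (IHr1 (proj1 HL) Hf1), (IHr2 (proj2 HL) Hf2).
    reflexivity.
  - destruct (faithful_from_app _ _ r1 r2 Hf eq_refl eq_refl) as [Hf1 Hf2].
    rewrite verdict_POr, orb_true_iff, (IHr1 (proj1 HL) Hf1), (IHr2 (proj2 HL) Hf2).
    reflexivity.
  - exact (verdict_PX_sat _ _ Hi (Hnext r HL (faithful_from_next i (PX r) r (incl_refl _) Hf))).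
  - exact (verdict_PXw_sat _ _ Hi (Hnext r HL (faithful_from_next i (PXw r) r (incl_refl _) Hf))).
  - destruct (faithful_from_app _ _ r1 r2 Hf eq_refl eq_refl) as [Hf1 Hf2].
    rewrite verdict_PU, sat_PU_unfold by exact Hi.
    rewrite orb_true_iff, andb_true_iff, (IHr1 (proj1 HL) Hf1), (IHr2 (proj2 HL) Hf2),
      (verdict_PX_sat _ _ Hi (Hnext _ HL (faithful_from_next i _ (PU r1 r2) (incl_refl _) Hf))).
    reflexivity.
  - destruct (faithful_from_app _ _ r1 r2 Hf eq_refl eq_refl) as [Hf1 Hf2].
    rewrite verdict_PR, sat_PR_unfold by exact Hi.
    rewrite andb_true_iff, orb_true_iff, (IHr1 (proj1 HL) Hf1), (IHr2 (proj2 HL) Hf2),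
      (verdict_PXw_sat _ _ Hi (Hnext _ HL (faithful_from_next i _ (PR r1 r2) (incl_refl _) Hf))).
    reflexivity.
  - destruct HL.
  - destruct HL.
Qed.

End Verdict.

Section AtomSequence.
Context {Sg : signature} (psi : @prop Sg) (tau : @trace Sg).

Definition seq_atom (i : nat) : @atom Sg -> Prop :=
  match i with
  | 0 => fun a => In a (foa psi) /\ atom_lb a = false /\
                  atom_holds (tasg tau 0) (tasg tau 0) a
  | S j => fun a => In a (foa psi) /\ atom_holds (tasg tau j) (tasg tau (S j)) a
  end.

Lemma seq_atoms_eq : seq_atoms psi tau = map seq_atom (seq 0 (tlen tau)).
Proof. reflexivity. Qed.

Lemma seq_atom_agrees i a :
  In a (foa psi) -> (i = 0 -> atom_lb a = false) -> agrees tau seq_atom i a.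
Proof.
  intros Hin Hlb; unfold agrees; destruct i as [| j]; cbn [seq_atom atom_sat].
  - rewrite (Hlb eq_refl); split; [tauto | intros [H | H]; [discriminate | tauto]].
  - tauto.
Qed.

Lemma seq_atom_faithful : well_formed psi -> faithful_from tau seq_atom 0 psi.
Proof.
  intros Hw; split.
  - intros a Ha; apply seq_atom_agrees; [apply now_atoms_incl_foa; exact Ha |].
    intros _; exact (well_formed_now_atoms _ _ Hw Ha).
  - intros j a Hj Ha; apply seq_atom_agrees; [exact Ha | lia].
Qed.

End AtomSequence.

Theorem theorem1 (Sg : signature) (psi : @prop Sg) (tau : @trace Sg) :
  in_L psi -> well_formed psi ->
  (pequiv (last_true (prog_seq (seq_atoms psi tau) psi)) PTop <-> models tau psi).
Proof.
  intros HL Hw.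
  pose proof (tlen_pos tau) as Hn.
  assert (Hverdict : forall va vl vt,
            peval va vl vt (last_true (prog_seq (seq_atoms psi tau) psi))
            = verdict tau (seq_atom psi tau) va vl vt 0 psi)
    by (intros; unfold verdict; rewrite seq_atoms_eq, Nat.sub_0_r; reflexivity).
  pose proof (fun va vl vt =>
    verdict_sat tau _ va vl vt 0 psi Hn HL (seq_atom_faithful psi tau Hw)) as Hcorrect.
  unfold pequiv, models; cbn [peval]; split.
  - intros H; apply (Hcorrect (fun _ => false) false (fun _ => false)).
    rewrite <- Hverdict; apply H.
  - intros H va vl vt; rewrite Hverdict; apply Hcorrect, H.
Qed.
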